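(* Let $n=2k$ with $k>2$ an integer, let $u\in\mathbb{Z}_n^\times$, and let $\mathcal{B}$ be the set of bases of a rank-$3$ matroid on the ground set $\mathbb{Z}_n$ invariant under the translation action of $\mathbb{Z}_n$. Then $f_{u,ku}\subseteq\mathcal{B}$ if and only if $f_{u,(k+1)u}\subseteq\mathcal{B}$.
   Context: $\mathbb{Z}_n$ acts on $\binom{\mathbb{Z}_n}{3}$ by $x\cdot\{a,b,c\}=\{x+a,x+b,x+c\}$. For $i,j\in\mathbb{Z}_n$ with $0,i,j$ pairwise distinct, $f_{i,j}=\{\{a,a+i,a+j\}\mid a\in\mathbb{Z}_n\}$. A matroid on ground set $\mathbb{Z}_n$ is invariant if its basis set is preserved by this action. $\mathbb{Z}_n^\times$ denotes the units of $\mathbb{Z}_n$. *)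

From mathcomp Require Import all_boot all_algebra.
Set Implicit Arguments. Unset Strict Implicit. Unset Printing Implicit Defensive.
Import GRing.Theory.
Local Open Scope ring_scope.

Definition is_matroid_bases (T : finType) (B : {set {set T}}) : Prop :=
  B != set0 /\
  forall B1 B2, B1 \in B -> B2 \in B -> forall x, x \in B1 :\: B2 ->
    exists2 y, y \in B2 :\: B1 & (B1 :\ x) :|: [set y] \in B.

Definition is_rank_matroid_bases (T : finType) (r : nat) (B : {set {set T}}) : Prop :=
  is_matroid_bases B /\ forall b, b \in B -> #|b| = r.

Definition translate (n : nat) (x : 'Z_n) (A : {set 'Z_n}) : {set 'Z_n} :=
  [set x + a | a in A].

Definition translation_invariant (n : nat) (B : {set {set 'Z_n}}) : Prop :=
  forall x : 'Z_n, [set translate x b | b in B] = B.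

Definition orbit_f (n : nat) (i j : 'Z_n) : {set {set 'Z_n}} :=
  [set [set a; a + i; a + j] | a : 'Z_n].

(* The order-two element [w = k u] of [Z_2k] links the two orbits: the basis
   exchange axiom applied to the translate [{a+u, a+2u, a+u+w}] of the first
   triple and to [{a, a+u, a+w}], removing [a+2u], produces either
   [{a, a+u, a+u+w}] or its translate by [w], so [f_{u,w} ⊆ B] gives
   [f_{u,u+w} ⊆ B].  Since [f_{u,u+w} = f_{-u,w}] and [f_{-u,-u+w} = f_{u,w}],
   the same argument applied to [-u] gives the converse. *)
From mathcomp Require Import all_boot all_algebra zify.
Import GRing.Theory.
Local Open Scope ring_scope.

Lemma orbit_f_subset (n : nat) (B : {set {set 'Z_n}}) (i j : 'Z_n) :
  orbit_f i j \subset B <-> forall a, [set a; a + i; a + j] \in B.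
Proof.
split=> [/subsetP sub a | mem]; first exact/sub/imset_f.
by apply/subsetP => _ /imsetP [a _ ->].
Qed.

Lemma orbit_f_shift (n : nat) (v w : 'Z_n) : orbit_f v (v + w) = orbit_f (- v) w.
Proof.
suff sub (i j : 'Z_n) : orbit_f i (i + j) \subset orbit_f (- i) j.
  by apply/eqP; rewrite eqEsubset sub /=; have := sub (- v) (v + w); rewrite opprK addKr.
apply/subsetP => _ /imsetP [a _ ->]; apply/imsetP; exists (a + i) => //.
by apply/setP => z; rewrite !inE addrK addrA (orbC (z == a)).
Qed.

Lemma translate_set3 (n : nat) (x a b c : 'Z_n) :
  translate x [set a; b; c] = [set x + a; x + b; x + c].
Proof. by rewrite /translate !imsetU !imset_set1. Qed.

Lemma addrI_eq (V : zmodType) (a b c : V) : (a + b == a + c) = (b == c).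
Proof. exact/inj_eq/addrI. Qed.

Lemma addr_eq_self (V : zmodType) (a b : V) : (a + b == a) = (b == 0).
Proof. by rewrite -{2}(addr0 a) addrI_eq. Qed.

Lemma set3D2 (T : finType) (a b c : T) :
  b != a -> b != c -> [set a; b; c] :\ b = [set a; c].
Proof.
move=> ba bc; apply/setP => z; rewrite !inE.
by case: (eqVneq z b) => [->|] /=; rewrite ?(negbTE ba) ?(negbTE bc) ?orbF.
Qed.

Section ExchangeOrbits.

Variables (n : nat) (B : {set {set 'Z_n}}).
Hypotheses (hB : is_matroid_bases B) (hinv : translation_invariant B).

Lemma translate_mem x S : S \in B -> translate x S \in B.
Proof. by move=> SB; rewrite -(hinv x); apply: imset_f. Qed.

Variables (v w : 'Z_n).
Hypotheses (ww0 : w + w = 0) (v0 : v != 0) (vv0 : v + v != 0)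
  (vvw : v + v != w) (vw : v != w).

Lemma orbit_f_exchange : orbit_f v w \subset B -> orbit_f v (v + w) \subset B.
Proof.
move/orbit_f_subset=> orbB; apply/orbit_f_subset => a.
have [_ exch] := hB.
have B1 : [set a + v; a + (v + v); a + v + w] \in B.
  by have := orbB (a + v); rewrite -addrA.
have new : a + (v + v) \in [set a + v; a + (v + v); a + v + w] :\: [set a; a + v; a + w].
  by rewrite !inE eqxx orbT andbT !addrI_eq !addr_eq_self (negbTE vv0) (negbTE v0) (negbTE vvw).
have [y] := exch _ _ B1 (orbB a) _ new.
rewrite set3D2; last 2 first.
- by rewrite addrI_eq addr_eq_self.
- by rewrite -addrA addrI_eq addrI_eq.
rewrite !inE => /andP [y_out y_in] yB.
have {}yB : [set y; a + v; a + (v + w)] \in B.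
  suff <- : [set a + v; a + v + w] :|: [set y] = [set y; a + v; a + (v + w)] by [].
  by apply/setP => z; rewrite !inE addrA; case: (z == y); rewrite ?orbT ?orbF.
case/orP: y_in yB => [/orP [] | ] /eqP y_def; rewrite y_def // in y_out *.
  by rewrite eqxx in y_out.
move/(translate_mem w); rewrite translate_set3.
have -> : w + (a + w) = a by rewrite addrCA ww0 addr0.
have -> : w + (a + (v + w)) = a + v by rewrite addrCA [w + _]addrCA ww0 addr0.
have -> : w + (a + v) = a + (v + w) by rewrite addrC addrA.
suff -> : [set a; a + (v + w); a + v] = [set a; a + v; a + (v + w)] by [].
by apply/setP => z; rewrite !inE orbAC.
Qed.

End ExchangeOrbits.

Lemma orbit_f_exchange_iff (n : nat) (B : {set {set 'Z_n}}) (v w : 'Z_n) :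
  is_matroid_bases B -> translation_invariant B ->
  w + w = 0 -> v != 0 -> v + v != 0 -> v + v != w -> v != w ->
  orbit_f v w \subset B <-> orbit_f v (v + w) \subset B.
Proof.
move=> hB hinv ww0 v0 vv0 vvw vw; split; first exact: orbit_f_exchange.
have Nw : - w = w by apply/eqP; rewrite eq_sym -addr_eq0 ww0.
rewrite orbit_f_shift -{2}(opprK v) -(orbit_f_shift _ (- v)).
apply: orbit_f_exchange => //.
- by rewrite oppr_eq0.
- by rewrite -opprD oppr_eq0.
- by rewrite -opprD -{1}Nw (inj_eq (@oppr_inj _)).
- by rewrite -{1}Nw (inj_eq (@oppr_inj _)).
Qed.

Lemma eq_unit_mulrn (n : nat) (u : 'Z_n) (i j : nat) : (1 < n)%N ->
  u \is a GRing.unit -> (i < n)%N -> (j < n)%N -> (u *+ i == u *+ j) = (i == j).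
Proof.
move=> n_gt1 hu i_lt j_lt; rewrite -[u *+ i]mulr_natr -[u *+ j]mulr_natr.
by rewrite (inj_eq (mulrI hu)) -(inj_eq val_inj) /= !val_Zp_nat // !modn_small.
Qed.

Theorem mainTheorem13 (k : nat) (hk : (2 < k)%N) (u : 'Z_(2 * k))
  (hu : u \is a GRing.unit) (B : {set {set 'Z_(2 * k)}})
  (hB : is_rank_matroid_bases 3 B) (hinv : translation_invariant B) :
  orbit_f u (u *+ k) \subset B <-> orbit_f u (u *+ k.+1) \subset B.
Proof.
have neq i j : (i < 2 * k)%N -> (j < 2 * k)%N -> i != j -> u *+ i != u *+ j.
  by move=> i_lt j_lt ij; rewrite eq_unit_mulrn //; lia.
rewrite mulrS; apply: orbit_f_exchange_iff hB.1 hinv _ _ _ _ _.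
- by rewrite -mulrnDr addnn -mul2n -mulr_natr pchar_Zp ?mulr0 //; lia.
- by apply: (neq 1%N 0%N); lia.
- by apply: (neq 2%N 0%N); lia.
- by apply: (neq 2%N k); lia.
- by apply: (neq 1%N k); lia.
Qed.
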